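(* Let $q$ be an odd prime power and $\mathcal{L}'$ as in the context. Then there is no plane $\pi$ of $\mathrm{PG}(3,q)$ with $\mathsf{Line}(\pi)\subseteq\mathcal{L}'$ or $\mathsf{Line}(\pi)\cap\mathcal{L}'=\emptyset$, and there is no point $P$ with $\mathsf{Star}(P)\subseteq\mathcal{L}'$ or $\mathsf{Star}(P)\cap\mathcal{L}'=\emptyset$.
   Context: $\mathrm{PG}(3,q)$ is the 3-dimensional projective space over $\mathbb{F}_q$. $\mathsf{Star}(P)$ is the set of lines through the point $P$, $\mathsf{Line}(\pi)$ the set of lines in the plane $\pi$. Bruen-Drudge construction: $q$ odd, $\mathcal{Q}$ an elliptic quadric of $\mathrm{PG}(3,q)$ with quadratic form $\mathsf{Q}$. For $P\in\mathcal{Q}$, $\tau_P$ is the tangent plane at $P$ and the tangent lines at $P$ are the $q+1$ lines through $P$ in $\tau_P$. Each point $P'\neq P$ on such a tangent line is off $\mathcal{Q}$, and whether $\mathsf{Q}(v)$ is a nonzero square in $\mathbb{F}_q$ for a vector $v$ representing $P'$ is independent of the choice of $P'\ne P$ on the line and of $v$. Let $\mathcal{T}_P^1$ be the set of tangent lines at $P$ whose points $P'\ne P$ have $\mathsf{Q}(P')$ a square, and $\mathcal{T}_P^2$ the remaining tangent lines at $P$. Put $\mathcal{T}^i=\bigcup_{P\in\mathcal{Q}}\mathcal{T}_P^i$ ($i=1,2$), and let $\mathcal{S}$ be the set of secant lines (meeting $\mathcal{Q}$ in 2 points). The Bruen-Drudge line class is $\mathcal{L}=\mathcal{S}\cup\mathcal{T}^1$.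 Fix $P_1\in\mathcal{Q}$ and define the switched class $\mathcal{L}':=\bigl(\mathcal{L}\cup(\mathsf{Line}(\tau_{P_1})\setminus\mathsf{Star}(P_1))\bigr)\setminus(\mathsf{Star}(P_1)\setminus\mathsf{Line}(\tau_{P_1}))$. *)

From HB Require Import structures.
From mathcomp Require Import all_boot all_order all_algebra.
Set Implicit Arguments. Unset Strict Implicit. Unset Printing Implicit Defensive.
Import GRing.Theory.
Local Open Scope ring_scope.

(* PG(3,F): points = nonzero row vectors of 'rV[F]_4 (up to scalars),
   lines = row spaces of matrices of rank 2, planes = row spaces of rank 3.
   A quadratic form Q (q odd) is given by a symmetric matrix B:
   Q(v) = v B v^T. *)

Section PG3.
Variable F : finFieldType.
Implicit Types (B : 'M[F]_4) (v P : 'rV[F]_4) (L pi : 'M[F]_4).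

Definition Qf B v : F := (v *m B *m v^T) 0 0.

Definition is_point v : Prop := v != 0.
Definition is_line L : Prop := \rank L = 2%N.
Definition is_plane pi : Prop := \rank pi = 3%N.

Definition on_sub v L : Prop := (v <= L)%MS.
Definition sub_sp L pi : Prop := (L <= pi)%MS.
Definition same_point (u v : 'rV[F]_4) : Prop := (u == v)%MS.

Definition onQ B v : Prop := v != 0 /\ Qf B v = 0.

Definition elliptic B : Prop :=
  B^T = B /\ \det B != 0 /\
  forall L, is_line L -> exists v, on_sub v L /\ Qf B v != 0.

Definition tau B P : 'M[F]_4 := kermx (B *m P^T).

Definition nonzero_square (y : F) : Prop := y != 0 /\ exists x, y = x ^+ 2.

Definition secant B L : Prop :=
  is_line L /\
  exists P1 P2, onQ B P1 /\ onQ B P2 /\ on_sub P1 L /\ on_sub P2 L /\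
     ~ same_point P1 P2 /\
     forall P, onQ B P -> on_sub P L -> same_point P P1 \/ same_point P P2.

Definition tangent_at B P L : Prop :=
  is_line L /\ on_sub P L /\ sub_sp L (tau B P).

Definition T1_at B P L : Prop :=
  tangent_at B P L /\
  forall P', is_point P' -> on_sub P' L -> ~ same_point P' P ->
    nonzero_square (Qf B P').

Definition T1 B L : Prop := exists P, onQ B P /\ T1_at B P L.

Definition BD B L : Prop := secant B L \/ T1 B L.

Definition Star P L : Prop := is_line L /\ on_sub P L.
Definition LineOf pi L : Prop := is_line L /\ sub_sp L pi.

Definition BDswitched B P1 L : Prop :=
  (BD B L \/ (LineOf (tau B P1) L /\ ~ Star P1 L)) /\
  ~ (Star P1 L /\ ~ LineOf (tau B P1) L).

End PG3.

From HB Require Import structures.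
From mathcomp Require Import all_boot all_order all_algebra.
From mathcomp Require Import fingroup pgroup abelian finfield.
From mathcomp Require Import ring.
Set Implicit Arguments. Unset Strict Implicit. Unset Printing Implicit Defensive.
Import GRing.Theory.
Local Open Scope ring_scope.

(* Take [e = P1] and an isotropic [f] with [b e f = 1]. The quadric being
   elliptic, the orthogonal complement [W] of [e] and [f] is an anisotropic
   plane; [q] being odd, [W] represents every nonzero value and some value is a
   nonsquare. Lines of the tangent plane at [e] missing [e] are switched into the
   class, lines through [e] leaving that plane are switched out, and all other
   lines keep their status: secants and tangents in T^1 are in, external lines
   and tangents in T^2 are out. Splitting points and planes according to their
   position relative to [e] and its tangent plane, each case exhibits, with
   vectors built from [e], [f] and [W], one line of each status. *)

(** * Finite fields of odd order *)

Lemma sqr_eq_nonsquare (F : fieldType) (nu s t : F) :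
  (forall x, x ^+ 2 != nu) -> s ^+ 2 = nu * t ^+ 2 -> s = 0 /\ t = 0.
Proof.
move=> nonsq st; have [t0|tn0] := eqVneq t 0.
  by move/eqP: st; rewrite t0 expr0n mulr0 expf_eq0 => /eqP.
by move: (nonsq (s / t)); rewrite expr_div_n st mulfK ?expf_neq0 ?eqxx.
Qed.

Lemma card_le_squares_double (F : finFieldType) :
  (#|F| <= #|[set x ^+ 2 | x : F]| * 2)%N.
Proof.
pose g (x : F) := (x ^+ 2, (enum_rank x < enum_rank (- x))%N).
have g_inj : injective g.
  move=> x y [] /eqP; rewrite eqf_sqr => /orP[/eqP //|/eqP ->].
  rewrite opprK => h; apply/eqP; rewrite -(inj_eq (@enum_rank_inj _)).
  by apply/eqP/val_inj; move: h; case: ltngtP.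
have : (#|g @: [set: F]| <= #|setX [set x ^+ 2 | x : F] [set: bool]|)%N.
  apply: subset_leq_card; apply/subsetP => _ /imsetP [x _ ->].
  by rewrite !inE /= andbT; apply/imsetP; exists x.
by rewrite card_imset // cardsX !cardsT card_bool.
Qed.

Section OddFiniteField.
Variable F : finFieldType.
Hypothesis oddF : odd #|F|.

Lemma two_neq0 : (2 : F) != 0.
Proof.
apply: contraTneq oddF => two0.
have pchar2 : 2%N \in [pchar F] by rewrite inE /= two0 eqxx.
have /card_pgroup cardF := abelem_pgroup (fin_ring_pchar_abelem pchar2).
rewrite cardsT in cardF; rewrite cardF oddX orbF; apply/eqP => logF0.
by have := finNzRing_gt1 F; rewrite cardF logF0.
Qed.

Lemma exists_neq0_neq (a : F) : exists c : F, c != 0 /\ c != a.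
Proof.
have [->|a1] := eqVneq a 1; last by exists 1; rewrite oner_neq0 eq_sym.
by exists 2; rewrite two_neq0 -subr_eq0 -[2]/(1 + 1)%:R natrD mulr1n addrK oner_neq0.
Qed.

Lemma exists_nonsquare : exists nu : F, forall x, x ^+ 2 != nu.
Proof.
case: (pickP [pred nu : F | [forall x, x ^+ 2 != nu]]) => [nu /forallP | all_sq].
  by exists nu.
pose sqrt (y : F) : F := odflt 0 [pick x | x ^+ 2 == y].
have sqrtK : cancel sqrt (fun x : F => x ^+ 2).
  move=> y; rewrite /sqrt; case: pickP => [x /eqP //|no_root].
  by have /negbT/forallPn[x /negPn/eqP] := all_sq y; move/eqP: (no_root x) => /[swap] ->.
have sqrt_inj := can_inj sqrtK.
have [y1 y1E] := codomP (injF_onto sqrt_inj 1).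
have [y2 y2E] := codomP (injF_onto sqrt_inj (-1)).
have y12 : y1 = y2 by rewrite -[y1]sqrtK -[y2]sqrtK -y1E -y2E sqrrN.
have one_opp : 1 = -1 :> F by rewrite {1}y1E y2E y12.
by move: two_neq0; rewrite (natrD _ 1 1) mulr1n {2}one_opp subrr eqxx.
Qed.

(* The sets [a S] and [c - b S], S the squares, each have more than
   half the elements of F, so they meet. *)
Lemma sum_scaled_squares (a b c : F) :
  a != 0 -> b != 0 -> exists x y, a * x ^+ 2 + b * y ^+ 2 = c.
Proof.
move=> a0 b0.
pose S := [set x ^+ 2 | x : F].
pose A := [set a * s | s in S].
pose C := [set c - b * s | s in S].
have cardA : #|A| = #|S| by rewrite card_imset //; apply: mulfI.
have cardC : #|C| = #|S| by rewrite card_imset // => s t /= /addrI /oppr_inj; apply: mulfI.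
have : (0 < #|A :&: C|)%N.
  have cardAC : (#|A :|: C| <= #|F|)%N by rewrite -cardsT subset_leq_card // subsetT.
  have oddS : (#|F| != #|S| * 2)%N.
    by apply: contraTneq oddF => ->; rewrite muln2 odd_double.
  rewrite lt0n; apply: contra oddS => /eqP AC0.
  have := cardsUI A C; rewrite AC0 addn0 cardA cardC addnn -muln2 => cardU.
  by rewrite eqn_leq card_le_squares_double -cardU cardAC.
case/card_gt0P => _ /setIP[/imsetP[_ /imsetP[x _ ->] ->] /imsetP[_ /imsetP[y _ ->]]].
by move/eqP; rewrite eq_sym subr_eq => /eqP ->; exists x, y; rewrite addrC.
Qed.

End OddFiniteField.

(** * Bilinear forms and lines *)

Lemma mx11_eq0 (F : fieldType) (M : 'M[F]_1) : (M == 0) = (M 0 0 == 0).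
Proof.
apply/eqP/eqP => [->|M00]; first by rewrite mxE.
by apply/matrixP => i j; rewrite !ord1 M00 mxE.
Qed.

Lemma left_kernel_neq0 (F : fieldType) m k (M : 'M[F]_(m, k)) :
  (\rank M < m)%N -> exists v : 'rV[F]_m, v != 0 /\ v *m M = 0.
Proof.
move=> rkM; have : kermx M != 0 by rewrite -mxrank_eq0 mxrank_ker subn_eq0 -ltnNge.
case/matrix0Pn => i [j Mij]; exists (row i (kermx M)); split.
  by apply: contraNneq Mij => /rowP/(_ j); rewrite !mxE => ->.
by apply/eqP; rewrite -sub_kermx row_sub.
Qed.

Section BilinearForm.
Variables (F : fieldType) (n : nat) (B : 'M[F]_n).
Implicit Types u v w : 'rV[F]_n.

Definition bform u v : F := (u *m B *m v^T) 0 0.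

Lemma bformDl u v w : bform (u + v) w = bform u w + bform v w.
Proof. by rewrite /bform !mulmxDl mxE. Qed.
Lemma bformDr u v w : bform w (u + v) = bform w u + bform w v.
Proof. by rewrite /bform linearD /= mulmxDr mxE. Qed.
Lemma bformZl a u w : bform (a *: u) w = a * bform u w.
Proof. by rewrite /bform -!scalemxAl mxE. Qed.
Lemma bformZr a u w : bform w (a *: u) = a * bform w u.
Proof. by rewrite /bform linearZ /= -scalemxAr mxE. Qed.
Lemma bformNl u w : bform (- u) w = - bform u w.
Proof. by rewrite -scaleN1r bformZl mulN1r. Qed.
Lemma bformNr u w : bform w (- u) = - bform w u.
Proof. by rewrite -scaleN1r bformZr mulN1r. Qed.
Lemma bform0l w : bform 0 w = 0.
Proof. by rewrite /bform !mul0mx mxE. Qed.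
Lemma bform0r w : bform w 0 = 0.
Proof. by rewrite /bform trmx0 mulmx0 mxE. Qed.

Definition bformE := (bformDl, bformDr, bformZl, bformZr, bformNl, bformNr, bform0l, bform0r).

Lemma bformC u v : B^T = B -> bform u v = bform v u.
Proof.
move=> B_sym; rewrite /bform.
have -> : (u *m B *m v^T) 0 0 = ((u *m B *m v^T)^T) 0 0 by rewrite [RHS]mxE.
by rewrite !trmx_mul trmxK B_sym mulmxA.
Qed.

End BilinearForm.

Section Join.
Variables (F : fieldType) (n : nat).
Implicit Types u v w : 'rV[F]_n.

Definition join u v : 'M[F]_n := (u + v)%MS.

Lemma in_joinP u v w : reflect (exists s t, w = s *: u + t *: v) (w <= join u v)%MS.
Proof.
apply: (iffP sub_addsmxP) => [[a ->]|[s [t ->]]].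
  by exists (a.1 0 0), (a.2 0 0); rewrite -!mul_scalar_mx -!mx11_scalar.
by exists (s%:M, t%:M); rewrite /= !mul_scalar_mx.
Qed.

Lemma join_rank u v : u != 0 -> ~~ (v <= u)%MS -> \rank (join u v) = 2%N.
Proof.
move=> u0 vu; apply/eqP; rewrite eqn_leq; apply/andP; split.
  apply: leq_trans (mxrank_adds_leqif u v) _.
  by rewrite !rank_rV; case: (u != 0); case: (v != 0).
have : (u < join u v)%MS.
  by rewrite ltmxE addsmxSl /=; apply: contra vu; apply: submx_trans; apply: addsmxSr.
by move/rank_ltmx; rewrite rank_rV u0.
Qed.

End Join.

(** * The elliptic quadric *)

Section EllipticQuadric.
Variables (F : finFieldType) (B : 'M[F]_4).
Hypothesis oddF : odd #|F|.
Hypothesis B_sym : B^T = B.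
Hypothesis B_unit : B \in unitmx.
Hypothesis no_singular_line :
  forall L : 'M[F]_4, is_line L -> exists v, on_sub v L /\ Qf B v != 0.

Local Notation b := (bform B).
Local Notation Q := (Qf B).
Implicit Types (u v w g P R : 'rV[F]_4) (L pi : 'M[F]_4).

Lemma bform_sym u v : b u v = b v u. Proof. exact: bformC. Qed.

Lemma QfE v : Q v = b v v. Proof. by []. Qed.

Lemma tauP P v : (v <= tau B P)%MS = (b v P == 0).
Proof. by rewrite /tau sub_kermx mulmxA mx11_eq0. Qed.

Lemma not_sub_tau e L v : (v <= L)%MS -> b v e != 0 -> ~ (L <= tau B e)%MS.
Proof. by move=> vL ve /(submx_trans vL); rewrite tauP (negbTE ve). Qed.

Lemma same_point_scale (c : F) v : c != 0 -> same_point (c *: v) v.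
Proof. by move=> c0; apply/eqmxP; apply: eqmx_scale. Qed.

Lemma exists_orthogonal (a1 a2 a3 : 'rV[F]_4) :
  exists2 v, v != 0 & [/\ b v a1 = 0, b v a2 = 0 & b v a3 = 0].
Proof.
have [|v [v0 vM]] := @left_kernel_neq0 _ _ _ (B *m (col_mx a1 (col_mx a2 a3))^T).
  exact: leq_ltn_trans (rank_leq_col _) _.
exists v => //; move: vM; rewrite !tr_col_mx mulmxA !mul_mx_row -!row_mx0.
by case/eq_row_mx => v1 /eq_row_mx [v2 v3]; rewrite /bform v1 v2 v3 !mxE.
Qed.

Definition is_pole pi n := forall v, (v <= pi)%MS = (b v n == 0).

Lemma plane_pole pi : is_plane pi -> exists2 n, n != 0 & is_pole pi n.
Proof.
move=> rk_pi.
have [|n [n0 n_pi]] := @left_kernel_neq0 _ _ _ (B *m pi^T).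
  by apply: leq_ltn_trans (mxrankM_maxr _ _) _; rewrite mxrank_tr rk_pi.
exists n => // v.
have pi_sub : (pi <= kermx (B *m n^T))%MS.
  by apply/sub_kermxP; have := congr1 trmx n_pi; rewrite !trmx_mul trmxK B_sym trmx0 mulmxA.
have rk_ker : \rank (kermx (B *m n^T)) = 3%N.
  rewrite mxrank_ker -mxrank_tr trmx_mul B_sym trmxK mxrankMfree ?row_free_unit //.
  by rewrite rank_rV n0.
have ker_sub : (kermx (B *m n^T) <= pi)%MS.
  by have := mxrank_leqif_sup pi_sub; rewrite rk_ker rk_pi => [[_ <-]].
apply/idP/idP => [/submx_trans/(_ pi_sub)|vn].
  by rewrite sub_kermx mulmxA mx11_eq0.
by rewrite (submx_trans _ ker_sub) // sub_kermx mulmxA mx11_eq0.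
Qed.

Definition perp (a1 a2 : 'rV[F]_4) : 'M[F]_4 := kermx (B *m (col_mx a1 a2)^T).

Lemma sub_perp (a1 a2 : 'rV[F]_4) v : (v <= perp a1 a2)%MS = (b v a1 == 0) && (b v a2 == 0).
Proof. by rewrite sub_kermx tr_col_mx !mul_mx_row row_mx_eq0 !mulmxA !mx11_eq0. Qed.

Lemma perp_rank (a1 a2 : 'rV[F]_4) : a1 != 0 -> ~~ (a2 <= a1)%MS -> \rank (perp a1 a2) = 2%N.
Proof.
move=> a1_0 a21; rewrite mxrank_ker eqmxMfull ?row_full_unit // mxrank_tr.
by rewrite -addsmxE (join_rank a1_0 a21).
Qed.

Lemma join_is_line u v g : u != 0 -> b u g = 0 -> b v g != 0 -> is_line (join u v).
Proof.
move=> u0 ug vg; apply: join_rank => //.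
by apply: contra vg => /sub_rVP [a ->]; rewrite bformZl ug mulr0.
Qed.

Lemma lineof_join pi n u v : is_pole pi n -> is_line (join u v) ->
  b u n = 0 -> b v n = 0 -> LineOf pi (join u v).
Proof. by move=> pin line un vn; split => //; rewrite /sub_sp addsmx_sub !pin un vn eqxx. Qed.

Lemma secant_join R1 R2 : R1 != 0 -> R2 != 0 -> b R1 R1 = 0 -> b R2 R2 = 0 ->
  b R1 R2 != 0 -> secant B (join R1 R2).
Proof.
move=> R1_0 R2_0 QR1 QR2 b12; have two0 := two_neq0 oddF.
split; first by apply: join_is_line R1_0 QR1 _; rewrite bform_sym.
exists R1, R2; do 2!split => //; split; first exact: addsmxSl.
split; first exact: addsmxSr; split.
  by case/andP => _ /sub_rVP [a R2E]; move: b12; rewrite R2E bformZr QR1 mulr0 eqxx.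
move=> P [P0 QP] /in_joinP [s [t PE]]; move: QP.
rewrite QfE PE !bformE QR1 QR2 (bform_sym R2 R1) => /eqP.
have -> : s * (s * 0 + t * b R1 R2) + t * (s * b R1 R2 + t * 0) = 2 * s * t * b R1 R2 by ring.
rewrite !mulf_eq0 (negbTE two0) (negbTE b12) orbF /= => /orP [] /eqP st0.
- right; rewrite st0 scale0r add0r; apply: same_point_scale.
  by apply: contraNneq P0 => t0; rewrite PE st0 t0 !scale0r addr0.
- left; rewrite st0 scale0r addr0; apply: same_point_scale.
  by apply: contraNneq P0 => s0; rewrite PE st0 s0 !scale0r addr0.
Qed.

Lemma secant_eqmx L1 L2 : (L1 :=: L2)%MS -> secant B L1 -> secant B L2.
Proof.
move=> eqL [lineL [R1 [R2 [QR1 [QR2 [R1L [R2L [R12 onL]]]]]]]].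
split; first by rewrite /is_line -eqL.
exists R1, R2; rewrite /on_sub -!eqL; do 5!split => //.
by move=> P QP; rewrite /on_sub -eqL; apply: onL.
Qed.

(* The second point of the quadric on the line is [Q P *: R - (2 * b R P) *: P]. *)
Lemma secant_join_quadric R P : R != 0 -> b R R = 0 -> b R P != 0 -> secant B (join R P).
Proof.
move=> R0 QR RP; have two0 := two_neq0 oddF.
pose R2 := Q P *: R - (2 * b R P) *: P.
have bRR2 : b R R2 = - (2 * b R P ^+ 2) by rewrite !bformE QR; ring.
have bRR2_0 : b R R2 != 0 by rewrite bRR2 oppr_eq0 mulf_neq0 // expf_neq0.
have R2_0 : R2 != 0 by apply: contraNneq bRR2_0 => ->; rewrite bform0r.
have QR2 : b R2 R2 = 0 by rewrite /R2 !bformE QR (bform_sym P R) -QfE; ring.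
have secR2 := secant_join R0 R2_0 QR QR2 bRR2_0.
have lineRR2 : is_line (join R R2) by case: secR2.
apply: secant_eqmx secR2; apply/eqmxP.
have R2_sub : (join R R2 <= join R P)%MS.
  rewrite addsmx_sub addsmxSl; apply/in_joinP.
  by exists (Q P), (- (2 * b R P)); rewrite scaleNr.
have lineRP : is_line (join R P) by apply: join_is_line R0 QR _; rewrite bform_sym.
have := mxrank_leqif_eq R2_sub; rewrite lineRR2 lineRP.
by case=> _ <-.
Qed.

Lemma BD_quadric_point L : BD B L -> exists2 P, onQ B P & (P <= L)%MS.
Proof. by case=> [[_ [P [_ [QP [_ [PL _]]]]]] | [P [QP [[_ [PL _]] _]]]]; exists P. Qed.

(* [join u v] is an external line. *)
Definition external u v := forall s t, Q (s *: u + t *: v) = 0 -> s = 0 /\ t = 0.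

Lemma external_line u v : external u v -> is_line (join u v).
Proof.
move=> ext; have u0 : u != 0.
  apply/eqP => u0; have [|/eqP] := ext 1 0; last by rewrite oner_eq0.
  by rewrite u0 scaler0 scale0r addr0 QfE bform0l.
apply: join_rank => //; apply/negP => /sub_rVP [a va].
have [|_ /eqP] := ext a (-1); last by rewrite oppr_eq0 oner_eq0.
by rewrite va scaleN1r addrN QfE bform0l.
Qed.

Lemma external_not_BD u v : external u v -> ~ BD B (join u v).
Proof.
move=> ext /BD_quadric_point [P [P0 QP] /in_joinP [s [t PE]]].
by move: P0 QP; rewrite PE => /[swap] /ext [-> ->]; rewrite !scale0r addr0 eqxx.
Qed.

Section Switching.
Variable e : 'rV[F]_4.
Local Notation switched := (BDswitched B e).

Lemma switched_in_tau L : is_line L -> (L <= tau B e)%MS -> ~ (e <= L)%MS -> switched L.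
Proof.
move=> lineL Ltau eL; split; first by right; split => // [[_ /eL]].
by case=> [[_ /eL]].
Qed.

Lemma switched_BD L : BD B L -> ~ (e <= L)%MS \/ (L <= tau B e)%MS -> switched L.
Proof.
move=> BDL eL; split; first by left.
by case=> [[lineL eL'] nLtau]; case: eL => [/(_ eL') | Ltau] //; apply: nLtau.
Qed.

Lemma unswitched_through_e L : (e <= L)%MS -> ~ (L <= tau B e)%MS -> ~ switched L.
Proof.
move=> eL nLtau [[BDL|[[_ Ltau] _]] nsw]; last exact: nLtau Ltau.
apply: nsw; split; last by case=> _ /nLtau.
by split => //; case: BDL => [[]|[P [_ [[]]]]].
Qed.

Lemma unswitched_not_BD L : ~ BD B L -> (e <= L)%MS \/ ~ (L <= tau B e)%MS -> ~ switched L.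
Proof.
move=> nBD eL [[/nBD //|[[lineL Ltau] nstar]] _].
by case: eL => [eL|/(_ Ltau) //]; apply: nstar.
Qed.

Lemma external_unswitched u v :
  external u v -> b v e != 0 -> is_line (join u v) /\ ~ switched (join u v).
Proof.
move=> ext ve; split; first exact: external_line.
apply: unswitched_not_BD; first exact: external_not_BD.
by right; apply: not_sub_tau ve; apply: addsmxSr.
Qed.

End Switching.

Lemma perp_sub (a1 a2 : 'rV[F]_4) m (X : 'M[F]_(m, 4)) :
  (forall v, b v a1 = 0 -> b v a2 = 0 -> (v <= X)%MS) -> (perp a1 a2 <= X)%MS.
Proof.
move=> subX; apply/row_subP => i; have := row_sub i (perp a1 a2).
by rewrite sub_perp => /andP [/eqP ? /eqP ?]; apply: subX.
Qed.

Lemma orthogonal_indep w1 w2 s t : b w1 w2 = 0 -> b w1 w1 != 0 -> b w2 w2 != 0 ->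
  s *: w1 + t *: w2 = 0 -> s = 0 /\ t = 0.
Proof.
move=> w12 Qw1 Qw2 st0; have /eqP := congr1 (fun v => b v w1) st0.
have /eqP := congr1 (fun v => b v w2) st0.
rewrite /= !bformE w12 (bform_sym w2 w1) w12 !mulr0 addr0 add0r !mulf_eq0.
by rewrite (negbTE Qw1) (negbTE Qw2) !orbF => /eqP -> /eqP ->.
Qed.

(** * Lines through points and in planes *)

Section HyperbolicPair.
Variables e f : 'rV[F]_4.
Hypothesis e_neq0 : e != 0.
Hypothesis Qe0 : b e e = 0.
Hypothesis Qf0 : b f f = 0.
Hypothesis bef : b e f = 1.
Local Notation switched := (BDswitched B e).

Lemma bfe : b f e = 1. Proof. by rewrite bform_sym. Qed.

Lemma perp_anisotropic w : b w e = 0 -> b w f = 0 -> b w w = 0 -> w = 0.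
Proof.
move=> we wf ww; apply/eqP; apply: contraT => w0.
have [|v [/in_joinP [s [t ->]] Qv]] := no_singular_line (join_is_line (v := e) w0 wf _).
  by rewrite bef oner_neq0.
by move: Qv; rewrite QfE !bformE ww Qe0 we (bform_sym e w) we !(mulr0, addr0) eqxx.
Qed.

Lemma perp_Q_neq0 w : b w e = 0 -> b w f = 0 -> w != 0 -> b w w != 0.
Proof. by move=> we wf; apply: contra => /eqP /(perp_anisotropic we wf) ->. Qed.

Lemma hyperbolic_decomp v :
  exists2 w, v = b v f *: e + b v e *: f + w & b w e = 0 /\ b w f = 0.
Proof.
exists (v - (b v f *: e + b v e *: f)); first by rewrite addrC subrK.
by rewrite !bformE Qe0 bfe bef Qf0; split; ring.
Qed.

Lemma tangent_point_decomp P : b P e = 0 -> ~~ (P <= e)%MS ->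
  exists2 w, P = b P f *: e + w & [/\ b w e = 0, b w f = 0 & b w w != 0].
Proof.
move=> Pe nPe; have [w PE [we wf]] := hyperbolic_decomp P.
rewrite Pe scale0r addr0 in PE; exists w => //; split => //.
by apply: perp_Q_neq0 => //; apply: contraNneq nPe => w0; rewrite PE w0 addr0 scalemx_sub.
Qed.

(* An orthogonal basis [u0, u1] of the complement of [e], [f] reduces this to
   [sum_scaled_squares]. *)
Lemma perp_universal c : c != 0 -> exists u, [/\ b u e = 0, b u f = 0 & b u u = c].
Proof.
move=> c0; have [u0 u0_0 [u0e u0f _]] := exists_orthogonal e f e.
have [u1 u1_0 [u1e u1f u10]] := exists_orthogonal e f u0.
have [x [y xy]] := sum_scaled_squares oddF c (perp_Q_neq0 u0e u0f u0_0) (perp_Q_neq0 u1e u1f u1_0).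
exists (x *: u0 + y *: u1); rewrite !bformE u0e u1e u0f u1f; split; try ring.
by rewrite -xy (bform_sym u0 u1) u10; ring.
Qed.

Definition lift z := (- b z z / 2) *: e + f + z.

Lemma lift_e z : b z e = 0 -> b (lift z) e = 1.
Proof. by move=> ze; rewrite !bformE Qe0 bfe ze; ring. Qed.

Lemma lift_quadric z : b z e = 0 -> b z f = 0 -> b (lift z) (lift z) = 0.
Proof.
move=> ze zf; rewrite !bformE Qe0 bfe bef Qf0 ze zf (bform_sym e z) (bform_sym f z) ze zf.
by field; apply: two_neq0.
Qed.

Lemma lift_neq0 z : b z e = 0 -> lift z != 0.
Proof. by move/lift_e => lz; apply: contra_eq_neq lz => ->; rewrite bform0l eq_sym oner_neq0. Qed.

Lemma unswitched_join_e v : b v e != 0 -> is_line (join e v) /\ ~ switched (join e v).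
Proof.
move=> ve; split; first exact: join_is_line e_neq0 Qe0 ve.
by apply: unswitched_through_e; [apply: addsmxSl | apply: not_sub_tau ve; apply: addsmxSr].
Qed.

Lemma switched_perp g : b e g != 0 -> is_line (perp e g) /\ switched (perp e g).
Proof.
move=> eg; have line : is_line (perp e g).
  by apply: perp_rank e_neq0 _; apply: contra eg => /sub_rVP [a ->]; rewrite bformZr Qe0 mulr0.
split => //; apply: switched_in_tau => //; first by apply: perp_sub => v ve _; rewrite tauP ve.
by rewrite sub_perp (negbTE eg) andbF.
Qed.

Lemma star_e_unswitched : exists2 L, Star e L & ~ switched L.
Proof.
have fe : b f e != 0 by rewrite bfe oner_neq0.
have [line uns] := unswitched_join_e fe.
by exists (join e f) => //; split => //; apply: addsmxSl.
Qed.

(* A tangent line at [e] through a point [u] with [Q u = 1] lies in T^1_e. *)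
Lemma star_e_switched : exists2 L, Star e L & switched L.
Proof.
have [u [ue uf uu]] := perp_universal (oner_neq0 F).
have eu : b e u = 0 by rewrite bform_sym.
have line : is_line (join e u) by apply: join_is_line e_neq0 eu _; rewrite uu oner_neq0.
have eL : (e <= join e u)%MS by apply: addsmxSl.
have Ltau : (join e u <= tau B e)%MS by rewrite addsmx_sub !tauP Qe0 ue eqxx.
exists (join e u) => //; apply: switched_BD; last by right.
right; exists e; do 2!split => //.
move=> P P0 /in_joinP [s [t PE]] nPe.
have t0 : t != 0.
  apply/eqP => t0; apply: nPe; rewrite PE t0 scale0r addr0 in P0 *.
  by apply: same_point_scale; apply: contraNneq P0 => ->; rewrite scale0r.
have -> : Q P = t ^+ 2 by rewrite QfE PE !bformE Qe0 ue (bform_sym e u) ue uu; ring.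
by split; [apply: expf_neq0 | exists t].
Qed.

Lemma star_tangent_switched P : b P e = 0 -> ~~ (P <= e)%MS -> exists2 L, Star P L & switched L.
Proof.
move=> Pe nPe; have [w PE [we wf Qw]] := tangent_point_decomp Pe nPe.
pose g := f - (b P f / b w w) *: w.
have eg : b e g != 0 by rewrite !bformE bef (bform_sym e w) we mulr0 subr0 oner_neq0.
have [line sw] := switched_perp eg.
exists (perp e g) => //; split => //; rewrite /on_sub sub_perp Pe eqxx /=.
by rewrite {1}PE !bformE bef wf (bform_sym e w) we; apply/eqP; field.
Qed.

Lemma star_tangent_unswitched P : b P e = 0 -> ~~ (P <= e)%MS ->
  exists2 L, Star P L & ~ switched L.
Proof.
move=> Pe nPe; have [w PE [we wf Qw]] := tangent_point_decomp Pe nPe.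
suff [v ve ext] : exists2 v, b v e != 0 & external P v.
  have [line uns] := external_unswitched ext ve.
  by exists (join P v) => //; split => //; apply: addsmxSl.
move: (b P f) PE => x ->.
have [-> | x0] := eqVneq x 0.
  have [w2 w2_0 [w2e w2f w2w]] := exists_orthogonal e f w.
  exists (f + w2); first by rewrite !bformE bfe w2e addr0 oner_neq0.
  have ww2 : b w w2 = 0 by rewrite bform_sym.
  move=> s t Qst; apply: orthogonal_indep ww2 Qw (perp_Q_neq0 w2e w2f w2_0) _.
  apply: perp_anisotropic; rewrite ?(bformE, we, wf, w2e, w2f, mulr0, addr0) //.
  rewrite -Qst QfE !bformE Qe0 Qf0 bef bfe we wf w2e w2f (bform_sym e w) (bform_sym f w).
  by rewrite (bform_sym e w2) (bform_sym f w2) we wf w2e w2f; ring.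
(* The line through [x e + w] and [f + lam w] meets the quadric where
   [2 x s t + Q w (s + lam t)^2 = 0], whose discriminant [x^2 + 2 x lam Q w] is
   made a nonsquare by the choice of [lam]. *)
have [nu nonsq] := exists_nonsquare oddF.
pose lam := (nu - x ^+ 2) / (2 * b w w * x).
exists (f + lam *: w); first by rewrite !bformE bfe we mulr0 addr0 oner_neq0.
move=> s t Qst.
have QE : 2 * x * s * t + b w w * (s + lam * t) ^+ 2 = 0.
  rewrite -Qst QfE !bformE Qe0 Qf0 bef bfe we wf (bform_sym e w) (bform_sym f w) we wf; ring.
have [|r0 t0] := @sqr_eq_nonsquare _ nu (b w w * (s + lam * t) + x * t) t nonsq.
  have lamE : x ^+ 2 + 2 * x * lam * b w w = nu.
    by rewrite /lam; field; rewrite x0 Qw two_neq0.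
  have -> : (b w w * (s + lam * t) + x * t) ^+ 2 = b w w * (2 * x * s * t +
      b w w * (s + lam * t) ^+ 2) + (x ^+ 2 + 2 * x * lam * b w w) * t ^+ 2 by ring.
  by rewrite QE mulr0 add0r lamE.
split=> //; move/eqP: r0.
by rewrite t0 !(mulr0, addr0) mulf_eq0 (negbTE Qw) => /eqP.
Qed.

Lemma star_nontangent_unswitched P : b P e != 0 -> exists2 L, Star P L & ~ switched L.
Proof.
move=> Pe; have [line uns] := unswitched_join_e Pe.
by exists (join e P) => //; split => //; apply: addsmxSr.
Qed.

(* Writing [P = x e + y f + w], the point [lift z] with [z = (w - u) / y] is on
   the quadric, and [2 y b (lift z) P = Q P - Q u]; pairing with [u] keeps [e]
   off the secant [join (lift z) P]. *)
Lemma star_nontangent_switched P : b P e != 0 -> exists2 L, Star P L & switched L.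
Proof.
move=> Pe; have [w PE [we wf]] := hyperbolic_decomp P.
move: (b P f) (b P e) Pe PE => x y y0 PE.
have [c [c0 cP]] := exists_neq0_neq oddF (b P P).
have [u [ue uf uu]] := perp_universal c0.
have [ew fw eu fu] : [/\ b e w = 0, b f w = 0, b e u = 0 & b f u = 0].
  by split; rewrite bform_sym.
pose z := y^-1 *: (w - u).
have ze : b z e = 0 by rewrite !bformE we ue; ring.
have zf : b z f = 0 by rewrite !bformE wf uf; ring.
have lzP : 2 * y * b (lift z) P = b P P - c.
  rewrite PE /lift /z !bformE ?(Qe0, Qf0, bef, bfe, we, wf, ew, fw, ue, uf, eu, fu, uu).
  by rewrite (bform_sym u w); field; rewrite y0 two_neq0.
have lzP0 : b (lift z) P != 0.
  by apply: contraNneq cP => lz0; rewrite eq_sym -subr_eq0 -lzP lz0 mulr0.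
have sec := secant_join_quadric (lift_neq0 ze) (lift_quadric ze zf) lzP0.
exists (join (lift z) P); first by split; [case: sec | apply: addsmxSr].
apply: switched_BD; [by left | left] => /in_joinP [s [t eE]].
have /= := congr1 (fun a => b a e) eE; rewrite bformDl !bformZl lift_e // PE !bformE.
rewrite Qe0 bfe we !(mulr0, addr0, add0r, mulr1) => E1.
have sE : s = - (t * y) by rewrite -[s]subr0 E1; ring.
have /= := congr1 (fun a => b a u) eE; rewrite PE /lift /z !bformE.
rewrite ?(eu, fu, ue, uu) sE => E2.
have tc : t * c = 0 by rewrite E2; field; rewrite y0 ?two_neq0.
move/eqP: tc; rewrite mulf_eq0 (negbTE c0) orbF => /eqP t0.
by move: e_neq0; rewrite eE sE t0 mul0r oppr0 !scale0r addr0 eqxx.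
Qed.

Lemma plane_tau_switched pi : is_pole pi e -> exists2 L, LineOf pi L & switched L.
Proof.
move=> pie; have ef : b e f != 0 by rewrite bef oner_neq0.
have [line sw] := switched_perp ef.
by exists (perp e f) => //; split => //; apply: perp_sub => v ve _; rewrite pie ve.
Qed.

(* A tangent line at [e] through a point [u] with [Q u] a nonsquare is in T^2_e. *)
Lemma plane_tau_unswitched pi : is_pole pi e -> exists2 L, LineOf pi L & ~ switched L.
Proof.
move=> pie; have [nu nonsq] := exists_nonsquare oddF.
have nu0 : nu != 0 by apply: contraNneq (nonsq 0) => ->; rewrite expr2 mulr0.
have [u [ue uf uu]] := perp_universal nu0.
have eu : b e u = 0 by rewrite bform_sym.
have line : is_line (join e u) by apply: join_is_line e_neq0 eu _; rewrite uu.
exists (join e u); first by apply: lineof_join pie line Qe0 ue.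
apply: unswitched_not_BD; last by left; apply: addsmxSl.
have onQ_e P : (P <= join e u)%MS -> b P P = 0 -> exists a, P = a *: e.
  case/in_joinP => s [t ->]; rewrite !bformE Qe0 eu ue uu => Q0.
  have [|_ ->] := @sqr_eq_nonsquare _ nu 0 t nonsq; last by exists s; rewrite scale0r addr0.
  by rewrite expr2 mulr0 -Q0; ring.
have u_off_e : ~ (u <= e)%MS.
  by case/sub_rVP => a ua; move: uu nu0; rewrite ua !bformE Qe0 !mulr0 => <-; rewrite eqxx.
case=> [[_ [P1 [P2 [[P1_0 QP1] [[P2_0 QP2] [P1L [P2L [nP12 _]]]]]]]] | [P [[P0 QP] [[_ [PL _]] T1P]]]].
  have [a1 P1E] := onQ_e _ P1L QP1; have [a2 P2E] := onQ_e _ P2L QP2.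
  have a_neq0 a : a *: e != 0 -> a != 0 by apply: contraNneq => ->; rewrite scale0r.
  rewrite P1E in P1_0; rewrite P2E in P2_0; apply: nP12; rewrite P1E P2E; apply/eqmxP.
  exact: eqmx_trans (eqmx_scale _ (a_neq0 _ P1_0)) (eqmx_sym (eqmx_scale _ (a_neq0 _ P2_0))).
have [a PE] := onQ_e _ PL QP.
have u0 : u != 0 by apply: contraNneq nu0 => u0; rewrite -uu u0 bform0l.
have [|_ [x ux]] := T1P u u0 (addsmxSr _ _); last by move: (nonsq x); rewrite -ux QfE uu eqxx.
case/andP => /sub_rVP [k uk] _; apply: u_off_e.
by rewrite uk PE scalerA scalemx_sub.
Qed.

Lemma plane_quadric_point n : b n e = 0 -> ~~ (n <= e)%MS ->
  exists R, [/\ b R R = 0, b R e = 1 & b R n = 0].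
Proof.
move=> ne nn; have [m nE [me mf Qm]] := tangent_point_decomp ne nn.
move: (b n f) nE => al nE.
pose z := (- al / b m m) *: m.
have ze : b z e = 0 by rewrite bformZl me mulr0.
have zf : b z f = 0 by rewrite bformZl mf mulr0.
exists (lift z); split; [exact: lift_quadric | exact: lift_e |].
rewrite nE /lift /z !bformE Qe0 bfe ?(me, mf, bef, Qf0) (bform_sym e m) (bform_sym f m) me mf.
by field; rewrite Qm two_neq0.
Qed.

Lemma plane_through_e_unswitched pi n R : is_pole pi n -> b e n = 0 ->
  b R e = 1 -> b R n = 0 -> exists2 L, LineOf pi L & ~ switched L.
Proof.
move=> pin en Re Rn; have [|line uns] := @unswitched_join_e R; first by rewrite Re oner_neq0.
by exists (join e R) => //; apply: lineof_join.
Qed.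

Lemma plane_through_e_switched pi n R : is_pole pi n -> b e n = 0 ->
  b R R = 0 -> b R e = 1 -> b R n = 0 -> exists2 L, LineOf pi L & switched L.
Proof.
move=> pin en QR Re Rn.
have [m m0 [me mn mR]] := exists_orthogonal e n R.
have R0 : R != 0 by apply: contraNneq (oner_neq0 F) => R0; rewrite -Re R0 bform0l.
have ReR : b R (e + m) = 1 by rewrite bformDr Re (bform_sym R m) mR addr0.
have ReR0 : b R (e + m) != 0 by rewrite ReR oner_neq0.
have sec := secant_join_quadric R0 QR ReR0.
exists (join R (e + m)).
  by apply: lineof_join => //; [case: sec | rewrite bformDl en mn addr0].
apply: switched_BD; [by left | left] => /in_joinP [s [t eE]].
have /= := congr1 (fun a => b a e) eE; rewrite !bformE Qe0 Re me !(mulr0, addr0, mulr1) => s0.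
have /= := congr1 (fun a => b a R) eE; rewrite !bformE QR (bform_sym e R) Re mR -s0.
rewrite !(mulr0, addr0, add0r, mulr1) => t1.
apply: (negP m0); apply/eqP; apply: (addrI e).
by rewrite addr0 [RHS]eE -s0 -t1 scale0r add0r scale1r.
Qed.

Lemma plane_avoiding_e_switched pi n : is_pole pi n -> b e n != 0 ->
  exists2 L, LineOf pi L & switched L.
Proof.
move=> pin en; have [line sw] := switched_perp en.
by exists (perp e n) => //; split => //; apply: perp_sub => v _ vn; rewrite pin vn.
Qed.

(* With [n = a e + f + m], the vectors [v1 = c e + f + m + z] (for a suitable
   [c]) and [v2 = u - b u m e] span a line of [pi] on which
   [Q (s v1 + t v2) = Q (s z + t u) - Q n s^2]. *)
Lemma plane_external_line pi n z u : is_pole pi n -> b n e = 1 ->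
  b z e = 0 -> b z f = 0 -> b u e = 0 -> b u f = 0 ->
  (forall s t, b (s *: z + t *: u) (s *: z + t *: u) = b n n * s ^+ 2 -> s = 0 /\ t = 0) ->
  exists2 L, LineOf pi L & ~ switched L.
Proof.
move=> pin ne ze zf ue uf aniso.
have [m nE [me mf]] := hyperbolic_decomp n; rewrite ne scale1r in nE.
move: (b n f) nE => a nE.
have [ez fz eu fu] : [/\ b e z = 0, b f z = 0, b e u = 0 & b f u = 0].
  by split; rewrite bform_sym.
have [em fm] : b e m = 0 /\ b f m = 0 by split; rewrite bform_sym.
pose v1 := (- a - b m m - b z m) *: e + f + m + z.
pose v2 := u - b u m *: e.
have v1e : b v1 e != 0.
  by rewrite !bformE Qe0 bfe me ze !(mulr0, addr0, add0r, mulr1) oner_neq0.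
have ext : external v2 v1.
  move=> t s Q0; suff [-> ->] : s = 0 /\ t = 0 by [].
  apply: aniso; rewrite -[LHS]subr0 -Q0 QfE nE /v1 /v2 !bformE.
  rewrite ?(Qe0, Qf0, bef, bfe, ez, fz, eu, fu, em, fm, ze, zf, ue, uf, me, mf).
  by rewrite ?(bform_sym m z) ?(bform_sym m u) ?(bform_sym z u); ring.
have [line uns] := external_unswitched ext v1e.
exists (join v2 v1) => //; apply: lineof_join => //.
  by rewrite nE !bformE ?(Qe0, Qf0, bef, bfe, eu, fu, em, fm, ue, uf, me, mf); ring.
rewrite nE !bformE ?(Qe0, Qf0, bef, bfe, ez, fz, em, fm, ze, zf, me, mf).
by rewrite ?(bform_sym m z); ring.
Qed.

Lemma plane_avoiding_e_unswitched pi n : is_pole pi n -> b n e = 1 ->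
  exists2 L, LineOf pi L & ~ switched L.
Proof.
move=> pin ne; have [Qn0|Qn] := eqVneq (b n n) 0.
  have [u0 u0_0 [u0e u0f _]] := exists_orthogonal e f e.
  have [u1 u1_0 [u1e u1f u10]] := exists_orthogonal e f u0.
  apply: (@plane_external_line pi n u0 u1) => // s t; rewrite Qn0 mul0r => Q0.
  apply: orthogonal_indep (perp_Q_neq0 u0e u0f u0_0) (perp_Q_neq0 u1e u1f u1_0) _.
    by rewrite bform_sym.
  by apply: perp_anisotropic => //; rewrite !bformE ?(u0e, u1e, u0f, u1f); ring.
have [nu nonsq] := exists_nonsquare oddF.
have nu0 : nu != 0 by apply: contraNneq (nonsq 0) => ->; rewrite expr2 mulr0.
have [u [ue uf uu]] := perp_universal (mulf_neq0 Qn nu0).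
apply: (@plane_external_line _ _ 0 u) => //; rewrite ?bform0l // => s t.
rewrite scaler0 add0r !bformE uu => Qst.
have [|-> ->] := @sqr_eq_nonsquare _ nu s t nonsq; last by [].
by apply: (mulfI Qn); rewrite -Qst; ring.
Qed.

(* [P = 0] needs no separate treatment: it lies on every line. *)
Lemma star_mixed P : (exists2 L, Star P L & ~ switched L) /\ (exists2 L, Star P L & switched L).
Proof.
have [Pe|Pe] := eqVneq (b P e) 0; last first.
  by split; [apply: star_nontangent_unswitched | apply: star_nontangent_switched].
have [Pe'|nPe] := boolP (P <= e)%MS; last first.
  by split; [apply: star_tangent_unswitched | apply: star_tangent_switched].
have star_e L : Star e L -> Star P L by case=> line eL; split => //; apply: submx_trans Pe' eL.
by split; [have [L /star_e] := star_e_unswitched | have [L /star_e] := star_e_switched];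
  exists L.
Qed.

Lemma plane_mixed pi : is_plane pi ->
  (exists2 L, LineOf pi L & ~ switched L) /\ (exists2 L, LineOf pi L & switched L).
Proof.
move=> /plane_pole [n n0 pin]; have [ne|ne] := eqVneq (b n e) 0.
  have [/sub_rVP [k nE]|nn] := boolP (n <= e)%MS.
    have k0 : k != 0 by apply: contraNneq n0 => k0; rewrite nE k0 scale0r.
    have pie : is_pole pi e by move=> v; rewrite pin nE bformZr mulf_eq0 (negbTE k0).
    by split; [apply: plane_tau_unswitched | apply: plane_tau_switched].
  have [R [QR Re Rn]] := plane_quadric_point ne nn.
  have en : b e n = 0 by rewrite bform_sym.
  by split; [apply: plane_through_e_unswitched Rn | apply: plane_through_e_switched Rn].
split; last by apply: plane_avoiding_e_switched pin _; rewrite bform_sym.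
apply: (@plane_avoiding_e_unswitched _ ((b n e)^-1 *: n)); last by rewrite bformZl mulVf.
by move=> v; rewrite pin bformZr mulf_eq0 invr_eq0 (negbTE ne).
Qed.

End HyperbolicPair.

Lemma exists_hyperbolic_partner e : e != 0 -> b e e = 0 -> exists2 f, b f f = 0 & b e f = 1.
Proof.
move=> e0 Qe0; have [X eX] : exists X, b e X != 0.
  have : e *m B != 0.
    by apply: contraNneq e0 => eB0; rewrite -(mulmxK B_unit e) eB0 mul0mx.
  case/matrix0Pn => i [j]; rewrite (ord1 i) => eBj; exists (delta_mx 0 j).
  by rewrite /bform trmx_delta -colE mxE.
pose R := b X X *: e - (2 * b e X) *: X.
have eR : b e R != 0.
  by rewrite !bformE Qe0 mulr0 add0r oppr_eq0 !mulf_neq0 ?two_neq0.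
exists ((b e R)^-1 *: R); last by rewrite bformZr mulVf.
by rewrite !bformE Qe0 (bform_sym X e); ring.
Qed.

End EllipticQuadric.

Lemma neither_all_nor_none (T : Type) (X S : T -> Prop) :
  (exists2 L, X L & ~ S L) -> (exists2 L, X L & S L) ->
  ~ (forall L, X L -> S L) /\ ~ (forall L, X L -> ~ S L).
Proof. by move=> [L1 XL1 nSL1] [L2 XL2 SL2]; split => all; [apply/nSL1/all | apply: all SL2]. Qed.

Theorem mainTheorem8 (F : finFieldType) (B : 'M[F]_4) (P1 : 'rV[F]_4) :
  odd #|F| -> elliptic B -> onQ B P1 ->
  (forall pi : 'M[F]_4, is_plane pi ->
     ~ (forall L, LineOf pi L -> BDswitched B P1 L) /\
     ~ (forall L, LineOf pi L -> ~ BDswitched B P1 L)) /\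
  (forall P : 'rV[F]_4, is_point P ->
     ~ (forall L, Star P L -> BDswitched B P1 L) /\
     ~ (forall L, Star P L -> ~ BDswitched B P1 L)).
Proof.
move=> oddF [B_sym [detB ell]] [P1_0 QP1].
have B_unit : B \in unitmx by rewrite unitmxE unitfE.
have [f Qf0 bef] := exists_hyperbolic_partner oddF B_sym B_unit P1_0 QP1.
split => [pi /(plane_mixed oddF B_sym B_unit ell P1_0 QP1 Qf0 bef) | P _].
  by case; apply: neither_all_nor_none.
by case: (star_mixed oddF B_sym B_unit ell P1_0 QP1 Qf0 bef P); apply: neither_all_nor_none.
Qed.
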